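(* Let $p$ be an odd prime, $t,s$ positive integers, $r=p^t$, $q=r^s$, $T=q+1$, let $\eta$ be the quadratic multiplicative character of $\mathbb{F}_r$ (with $\eta(0)=0$), and let $\chi(x)=\zeta_p^{\mathrm{Tr}_{q^2/p}(x)}$ ($\zeta_p=e^{2\pi i/p}$) be the canonical additive character of $\mathbb{F}_{q^2}$. For $a\in\mathbb{F}_{q^2}^*$ let $$Q=\sum_{x\in\mathbb{F}_{q^2}}\chi(ax)\,\eta(\mathrm{Tr}_{q/r}(x^T)).$$ Then $Q=0$ if $\mathrm{Tr}_{q/r}(a^T)=0$, and $Q=-q\,\eta(-\mathrm{Tr}_{q/r}(a^T))$ if $\mathrm{Tr}_{q/r}(a^T)\neq0$.
   Context: $\mathrm{Tr}_{q/r}$ is the trace from $\mathbb{F}_q$ to $\mathbb{F}_r$ and $\mathrm{Tr}_{q^2/p}$ the absolute trace of $\mathbb{F}_{q^2}$; note $x^{q+1}\in\mathbb{F}_q$ for $x\in\mathbb{F}_{q^2}$. *)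

From mathcomp Require Import all_boot all_algebra all_field.
Set Implicit Arguments. Unset Strict Implicit. Unset Printing Implicit Defensive.
Import GRing.Theory.
Local Open Scope ring_scope.

Definition relTr (L : finFieldType) (r s : nat) (y : L) : L :=
  \sum_(i < s) y ^+ (r ^ i).

Definition absTr (L : finFieldType) (p n : nat) (x : L) : L :=
  \sum_(i < n) x ^+ (p ^ i).

(* Canonical additive character chi(x) = zeta^(Tr(x)), where Tr(x) in F_p is
   identified with the unique k < p with k%:R = Tr(x). *)
Definition addChar (L : finFieldType) (p n : nat) (zeta : algC) (x : L) : algC :=
  if [pick k : 'I_p | (k%:R : L) == absTr p n x] is Some k then zeta ^+ k else 0.

(* Quadratic character eta of the subfield F_r = {z in L | z^r = z},
   with eta(0) = 0; applied to elements y of F_r. *)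
Definition qchar (L : finFieldType) (r : nat) (y : L) : algC :=
  if y == 0 then 0
  else if [exists z : L, (z ^+ r == z) && (z ^+ 2 == y)] then 1 else -1.

(* For v in F_r, eta(v) + 1 is the number of square roots of v in F_r, and
   orthogonality of a nontrivial additive character psi of F_r writes this count
   as r^-1 sum_(u, c in F_r) psi (c (u^2 - v)).  Taking psi y = chi (theta y) with
   Tr_{q/r}(theta) = 1 gives psi (c Tr_{q/r}(y)) = chi (c y) for y in F_q, so
   after this expansion Q becomes a combination, over c in F_r^*, of the sums
   sum_x chi (a x - c x^(q+1)) = -q chi (a^(q+1) / (4 c)); these follow by
   completing the norm form, since the norm maps L^* onto F_q^* with fibers of
   size q + 1.  The substitutions u -> u / (2 c) and c -> 1 / (4 c) then turn
   what is left back into the square-root count of -Tr_{q/r}(a^T). *)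

From mathcomp Require Import all_boot all_algebra all_field.
From mathcomp Require Import ring zify.
Set Implicit Arguments. Unset Strict Implicit. Unset Printing Implicit Defensive.
Import GRing.Theory Num.Theory.
Local Open Scope ring_scope.

Section RootCounting.
Variable R : finIdomainType.

Lemma card_roots_lt (P : {poly R}) (S : pred R) :
  P != 0 -> {in S, forall z, root P z} -> (#|S| < size P)%N.
Proof.
move=> P_neq0 rootS; rewrite cardE max_poly_roots ?enum_uniq //.
by apply/allP => z; rewrite mem_enum => /rootS.
Qed.

Lemma card_expr_eq_le (m : nat) (z : R) :
  (0 < m)%N -> (#|[pred y : R | y ^+ m == z]| <= m)%N.
Proof.
move=> m_gt0; have sizeP := size_XnsubC z m_gt0.
rewrite -ltnS -sizeP card_roots_lt -?size_poly_eq0 ?sizeP // => y.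
by rewrite inE /root !hornerE subr_eq0.
Qed.

Lemma card_expr_fixed_le (e : nat) :
  (1 < e)%N -> (#|[pred z : R | z ^+ e == z]| <= e)%N.
Proof.
move=> e_gt1; have sizeP : size ('X^e - 'X : {poly R}) = e.+1.
  by rewrite size_polyDl ?size_polyXn // size_polyN size_polyX ltnS.
rewrite -ltnS -sizeP card_roots_lt -?size_poly_eq0 ?sizeP // => z.
by rewrite inE /root !hornerE subr_eq0.
Qed.

(* The polynomial [\sum_(i < k) 'X^(m ^ i)] is nonzero of degree m ^ k.-1 < #|R|. *)
Lemma exists_expn_sum_neq0 (m k : nat) :
  (1 < m)%N -> (0 < k)%N -> #|R| = (m ^ k)%N ->
  exists x : R, \sum_(i < k) x ^+ (m ^ i) != 0.
Proof.
move=> m_gt1 k_gt0 cardR; apply/existsP; rewrite -negb_forall.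
apply/negP => /forallP sum_eq0.
pose P : {poly R} := \sum_(i < k) 'X^(m ^ i).
have P_neq0 : P != 0.
  have lt_k1_k : (k.-1 < k)%N by rewrite ltn_predL.
  apply/eqP => /(congr1 (fun P : {poly R} => P`_(m ^ k.-1))).
  rewrite coef_sum coef0 (bigD1 (Ordinal lt_k1_k)) //= coefXn eqxx big1 ?addr0.
    by move/eqP; rewrite oner_eq0.
  move=> i /eqP neq_i; rewrite coefXn eqn_exp2l //.
  by case: eqP => // eq_i; case: neq_i; apply: val_inj.
have sizeP : (size P <= (m ^ k.-1).+1)%N.
  rewrite (leq_trans (size_sum _ _ _)) //; apply/bigmax_leqP => i _.
  by rewrite size_polyXn ltnS leq_exp2l // -ltnS prednK.
have rootP z : z \in predT -> root P z.
  by move=> _; rewrite /root horner_sum; under eq_bigr do rewrite hornerXn; apply: sum_eq0.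
have := leq_trans (card_roots_lt P_neq0 rootP) sizeP.
rewrite cardT -cardE cardR -{1}(prednK k_gt0) expnS ltnS leqNgt ltn_Pmull //.
by rewrite expn_gt0 (ltn_trans _ m_gt1).
Qed.

End RootCounting.

Section FrobeniusPowers.
Variables (R : comNzRingType) (e : nat).
Hypothesis e_pchar : [pchar R].-nat e.

Lemma expr0n_pchar : 0 ^+ e = 0 :> R.
Proof. by case/andP: e_pchar => e_gt0 _; rewrite expr0n gtn_eqF. Qed.

Lemma expr_sum_pchar (I : Type) (r : seq I) (P : pred I) (F : I -> R) :
  (\sum_(i <- r | P i) F i) ^+ e = \sum_(i <- r | P i) F i ^+ e.
Proof.
exact: (big_morph (fun x : R => x ^+ e) (fun x y => exprDn_pchar x y e_pchar)
  expr0n_pchar).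
Qed.

Lemma natr_expr_pchar (k : nat) : (k%:R : R) ^+ e = k%:R.
Proof.
elim: k => [|k IHk]; first exact: expr0n_pchar.
by rewrite -addn1 natrD exprDn_pchar // IHk expr1n.
Qed.

Lemma exprBn_pchar (x y : R) : (x - y) ^+ e = x ^+ e - y ^+ e.
Proof. by rewrite exprDn_pchar // exprNn_pchar. Qed.

End FrobeniusPowers.

Lemma sum_additive_char_eq0 (V : finZmodType) (R : idomainType)
    (phi : V -> R) (S : pred V) (d : V) :
  {morph phi : x y / x + y >-> x * y} -> (forall x, S (x + d) = S x) ->
  phi d != 1 -> \sum_(x | S x) phi x = 0.
Proof.
move=> phiD Sd phid_neq1.
have : \sum_(x | S x) phi x = (\sum_(x | S x) phi x) * phi d.
  rewrite {1}(reindex_inj (addIr d)) mulr_suml /=.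
  by apply: eq_big => [x|x _]; rewrite ?Sd ?phiD.
move/eqP; rewrite -subr_eq0 -{1}[\sum_(x | _) _]mulr1 -mulrBr mulf_eq0 subr_eq0.
by rewrite [1 == _]eq_sym (negbTE phid_neq1) orbF => /eqP.
Qed.

Lemma qchar_sum_sqrt (L : finFieldType) (r : nat) (v : L) :
  odd r -> (2%:R : L) != 0 -> v ^+ r = v ->
  qchar r v = \sum_(u | u ^+ r == u) ((u ^+ 2 == v)%:R : algC) - 1.
Proof.
move=> r_odd two_neq0 vr; have fixed0 : (0 : L) ^+ r == 0.
  by rewrite expr0n; case: (r) r_odd.
rewrite /qchar; have [->|v_neq0] := eqVneq v 0.
  rewrite (bigD1 0) //= big1 => [|u /andP [_ u_neq0]]; last first.
    by rewrite sqrf_eq0 (negbTE u_neq0).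
  by rewrite expr0n eqxx addr0 subrr.
case: existsP => [[z /andP [/eqP zr /eqP zv]] | no_sqrt]; last first.
  rewrite big1 ?sub0r // => u /eqP ur.
  by case: eqP => // uv; case: no_sqrt; exists u; rewrite ur uv !eqxx.
have z_neq0 : z != 0 by apply: contraNneq v_neq0 => z0; rewrite -zv z0 expr0n.
have Nz_neq_z : - z != z.
  by rewrite -subr_eq0 -opprD oppr_eq0 -mulr2n -mulr_natl mulf_neq0.
rewrite (bigD1 z) ?zr ?eqxx //= (bigD1 (- z)) /=; last first.
  by rewrite exprNn -signr_odd r_odd zr mulN1r eqxx Nz_neq_z.
rewrite zv sqrrN zv eqxx big1 => [|u /andP [/andP [_ u_neq_z] u_neq_Nz]].
  by rewrite addr0 addrK.
by rewrite -zv eqf_sqr (negbTE u_neq_z) (negbTE u_neq_Nz).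
Qed.

Section AdditiveCharacter.
Variables (L : finFieldType) (p n : nat) (zeta : algC).
Hypotheses (p_prime : prime p) (n_gt0 : (0 < n)%N) (cardL : #|L| = (p ^ n)%N).
Hypothesis zeta_prim : p.-primitive_root zeta.

Local Notation Tr := (absTr p n).
Local Notation ch := (addChar p n zeta).

Lemma pcharL : p \in [pchar L].
Proof. exact: card_finPcharP cardL p_prime. Qed.

Lemma pchar_nat_expn (k : nat) : [pchar L].-nat (p ^ k)%N.
Proof. by rewrite pnatX pnatE // pcharL. Qed.

Lemma natr_inj_ltp (a b : nat) :
  (a < p)%N -> (b < p)%N -> a%:R = b%:R :> L -> a = b.
Proof.
wlog le_ab : a b / (a <= b)%N.
  by move=> wlog_ab ? ? ?; case/orP: (leq_total a b) => ?; [|apply/esym]; apply: wlog_ab.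
move=> a_lt b_lt eq_ab; rewrite -(modn_small a_lt) -(modn_small b_lt).
by apply/esym/eqP; rewrite eqn_mod_dvd // (dvdn_pcharf pcharL) natrB // eq_ab subrr.
Qed.

(* The p images of 'I_p are roots of 'X^p - 'X, which has at most p roots. *)
Lemma fixed_expp_natr (z : L) : z ^+ p = z -> exists2 k, (k < p)%N & z = k%:R.
Proof.
move=> zp; pose Fp := [set (k%:R : L) | k : 'I_p].
have card_Fp : #|Fp| = p.
  rewrite card_imset ?card_ord // => i j /natr_inj_ltp eq_ij.
  exact/val_inj/eq_ij.
have sub_Fp : Fp \subset [pred y : L | y ^+ p == y].
  apply/subsetP => _ /imsetP [k _ ->].
  by rewrite inE -{2}(expn1 p) natr_expr_pchar ?pchar_nat_expn.
have /subset_cardP /(_ sub_Fp) eq_Fp : #|Fp| = #|[pred y : L | y ^+ p == y]|.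
  apply/eqP; rewrite eqn_leq subset_leq_card // card_Fp.
  exact/card_expr_fixed_le/prime_gt1.
have := eq_Fp z; rewrite !inE zp eqxx => /imsetP [k _ ->].
by exists k.
Qed.

Lemma absTr_expp (x : L) : Tr x ^+ p = Tr x.
Proof.
have pchar_p : [pchar L].-nat p by rewrite -[p]expn1 pchar_nat_expn.
rewrite /absTr (expr_sum_pchar pchar_p).
under eq_bigr do rewrite -exprM -expnSr.
rewrite -(prednK n_gt0) big_ord_recr big_ord_recl /= prednK // -cardL expf_card.
by rewrite addrC; congr (_ + _); apply: eq_bigr => i _; rewrite expnS.
Qed.

Lemma absTr_natr (x : L) : exists2 k, (k < p)%N & Tr x = k%:R.
Proof. exact/fixed_expp_natr/absTr_expp. Qed.

Lemma absTrD (x y : L) : Tr (x + y) = Tr x + Tr y.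
Proof.
rewrite /absTr -big_split; apply: eq_bigr => i _.
by rewrite exprDn_pchar ?pchar_nat_expn.
Qed.

Lemma absTr_expr_pchar (e : nat) (x : L) : [pchar L].-nat e -> Tr (x ^+ e) = Tr x.
Proof.
move=> e_pchar; have [k _ Trx] := absTr_natr x.
rewrite [RHS]Trx -(natr_expr_pchar e_pchar k) -Trx /absTr expr_sum_pchar //.
by apply: eq_bigr => i _; rewrite exprAC.
Qed.

Lemma addCharE (x : L) (k : nat) : Tr x = k%:R -> ch x = zeta ^+ k.
Proof.
move=> Trx; rewrite /addChar; case: pickP => [j /eqP Trj | no_k].
  rewrite -(prim_expr_mod zeta_prim k); congr (_ ^+ _).
  apply: natr_inj_ltp => //; first by rewrite ltn_pmod ?prime_gt0.
  by rewrite (GRing.natr_mod_pchar pcharL) Trj Trx.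
have [j j_lt Trj] := absTr_natr x.
by have := no_k (Ordinal j_lt); rewrite /= Trj eqxx.
Qed.

Lemma addCharD (x y : L) : ch (x + y) = ch x * ch y.
Proof.
have [k _ Trx] := absTr_natr x; have [l _ Try] := absTr_natr y.
by rewrite (addCharE Trx) (addCharE Try) (@addCharE _ (k + l)%N) ?exprD // absTrD natrD Trx Try.
Qed.

Lemma addChar0 : ch (0 : L) = 1.
Proof.
rewrite (@addCharE _ 0%N) // /absTr big1 // => i _.
by rewrite expr0n expn_eq0 eqn0Ngt prime_gt0.
Qed.

Lemma addChar_expr_pchar (e : nat) (x : L) : [pchar L].-nat e -> ch (x ^+ e) = ch x.
Proof.
move=> e_pchar; have [k _ Trx] := absTr_natr x.
by rewrite (addCharE Trx) (@addCharE _ k) // absTr_expr_pchar.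
Qed.

Lemma addChar_neq0 (x : L) : ch x != 0.
Proof.
have [k _ Trx] := absTr_natr x.
by rewrite (addCharE Trx) expf_neq0 // (prim_root_eq0 zeta_prim) gtn_eqF ?prime_gt0.
Qed.

Lemma addCharN (x : L) : ch (- x) = (ch x)^-1.
Proof. by apply: (mulIf (addChar_neq0 x)); rewrite -addCharD addNr addChar0 mulVf ?addChar_neq0. Qed.

Lemma addChar_sum (I : finType) (P : pred I) (F : I -> L) :
  ch (\sum_(i | P i) F i) = \prod_(i | P i) ch (F i).
Proof. exact: (big_morph ch addCharD addChar0). Qed.

Lemma exists_addChar_neq1 : exists x : L, ch x != 1.
Proof.
have [x Trx_neq0] := exists_expn_sum_neq0 (prime_gt1 p_prime) n_gt0 cardL.
exists x; have [k _ Trx] := absTr_natr x.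
rewrite (addCharE Trx) -(prim_order_dvd zeta_prim).
apply: contra Trx_neq0 => p_dvd_k; change (Tr x == 0).
by rewrite Trx -(dvdn_pcharf pcharL).
Qed.

End AdditiveCharacter.

Section HermitianSums.
Variables (L : finFieldType) (p t s : nat) (zeta : algC).
Hypotheses (p_prime : prime p) (p_odd : odd p) (t_gt0 : (0 < t)%N) (s_gt0 : (0 < s)%N).
Local Notation r := (p ^ t)%N.
Local Notation q := (r ^ s)%N.
Hypothesis cardL : #|L| = (q ^ 2)%N.
Hypothesis zeta_prim : p.-primitive_root zeta.

Local Notation ch := (addChar p (2 * (t * s)) zeta).
Local Notation Tr := (relTr r s).

Let n_gt0 : (0 < 2 * (t * s))%N. Proof. by rewrite !muln_gt0 t_gt0 s_gt0. Qed.
Let cardL_p : #|L| = (p ^ (2 * (t * s)))%N.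
Proof. by rewrite cardL -!expnM mulnA mulnC. Qed.
Let r_gt1 : (1 < r)%N. Proof. by rewrite -(expn0 p) ltn_exp2l ?prime_gt1. Qed.
Let q_gt1 : (1 < q)%N. Proof. by rewrite -(expn0 r) ltn_exp2l. Qed.
Let r_gt0 : (0 < r)%N := ltnW r_gt1.
Let q_gt0 : (0 < q)%N := ltnW q_gt1.

Lemma pchar_nat_expr_r (i : nat) : [pchar L].-nat (r ^ i)%N.
Proof. by rewrite -expnM (pchar_nat_expn p_prime cardL_p). Qed.

Let pchar_r : [pchar L].-nat r. Proof. by rewrite -[r]expn1 pchar_nat_expr_r. Qed.
Let pchar_q : [pchar L].-nat q. Proof. exact: pchar_nat_expr_r. Qed.

Let chD : {morph ch : x y / x + y >-> x * y} :=
  addCharD p_prime n_gt0 cardL_p zeta_prim.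
Let ch0 : ch (0 : L) = 1 := addChar0 p_prime n_gt0 cardL_p zeta_prim.
Let chN (x : L) : ch (- x) = (ch x)^-1 := addCharN p_prime n_gt0 cardL_p zeta_prim x.
Let ch_neq0 (x : L) : ch x != 0 := addChar_neq0 p_prime n_gt0 cardL_p zeta_prim x.
Let ch_sum (I : finType) (P : pred I) (F : I -> L) :
  ch (\sum_(i | P i) F i) = \prod_(i | P i) ch (F i) :=
  addChar_sum p_prime n_gt0 cardL_p zeta_prim P F.
Let ch_frob (x : L) (e : nat) : [pchar L].-nat e -> ch (x ^+ e) = ch x :=
  addChar_expr_pchar p_prime n_gt0 cardL_p zeta_prim x.

Lemma expr_qq (x : L) : x ^+ q ^+ q = x.
Proof. by rewrite -exprM mulnn -cardL expf_card. Qed.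

Lemma fixed_r_expn (z : L) (i : nat) : z ^+ r = z -> z ^+ (r ^ i) = z.
Proof. by move=> zr; elim: i => [|i IHi]; rewrite ?expr1 // expnSr exprM IHi. Qed.

Lemma two_neq0 : (2%:R : L) != 0.
Proof.
rewrite -(dvdn_pcharf (pcharL p_prime cardL_p)).
apply/negP => /(dvdn_leq (ltn0Sn 1)).
by rewrite leqNgt odd_prime_gt2.
Qed.

Lemma four_neq0 : (4%:R : L) != 0.
Proof. by rewrite (natrM _ 2 2) mulf_neq0 ?two_neq0. Qed.

Lemma fixed_q_norm (x : L) : (x ^+ q.+1) ^+ q = x ^+ q.+1.
Proof. by rewrite exprS exprMn expr_qq mulrC. Qed.

Lemma relTr_fixed_r (y : L) : y ^+ q = y -> Tr y ^+ r = Tr y.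
Proof.
move=> yq; rewrite /relTr expr_sum_pchar //.
under eq_bigr do rewrite -exprM -expnSr.
rewrite -(prednK s_gt0) big_ord_recr big_ord_recl /= prednK // yq addrC.
by congr (_ + _); apply: eq_bigr => i _; rewrite expnS.
Qed.

Lemma relTrZ (c y : L) : c ^+ r = c -> Tr (c * y) = c * Tr y.
Proof.
move=> cr; rewrite /relTr mulr_sumr; apply: eq_bigr => i _.
by rewrite exprMn (fixed_r_expn _ cr).
Qed.

Lemma exists_fixed_q_addChar_neq1 : exists2 y : L, y ^+ q = y & ch y != 1.
Proof.
have [x ch_x] := exists_addChar_neq1 p_prime n_gt0 cardL_p zeta_prim.
pose h := x / 2%:R; exists (h + h ^+ q).
  by rewrite exprDn_pchar // expr_qq addrC.
have hh : h + h = x by rewrite -mulr2n -mulr_natr mulfVK ?two_neq0.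
by rewrite chD ch_frob // -chD hh.
Qed.

(* [Tr (x + x ^+ q)] is the trace of x from L to F_r, which is nonzero for some x. *)
Lemma exists_relTr_eq1 : exists2 theta : L, theta ^+ q = theta & Tr theta = 1.
Proof.
have cardL_r : #|L| = (r ^ (s + s))%N by rewrite cardL expnD.
have [x Tr_neq0] := exists_expn_sum_neq0 r_gt1 (ltn_addr s s_gt0) cardL_r.
pose y := x + x ^+ q.
have yq : y ^+ q = y by rewrite exprDn_pchar // expr_qq addrC.
have Try_neq0 : Tr y != 0.
  rewrite big_split_ord /= -big_split /= in Tr_neq0; apply: etrans Tr_neq0.
  congr (_ != 0); apply: eq_bigr => i _.
  by rewrite exprDn_pchar ?pchar_nat_expr_r // -exprM -expnD.
have Try_r := relTr_fixed_r yq.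
exists (y / Tr y); first by rewrite exprMn exprVn yq fixed_r_expn.
by rewrite mulrC relTrZ ?mulVf // exprVn Try_r.
Qed.

(* The norm maps L^* onto at most q - 1 values, with fibers of size at most q + 1,
   and (q - 1) (q + 1) = #|L^*|: so every fiber over F_q^* is full. *)
Lemma card_norm_fiber (z : L) :
  z ^+ q = z -> z != 0 -> #|[pred y : L | y ^+ q.+1 == z]| = q.+1.
Proof.
pose Fq' := [pred z : L | (z ^+ q == z) && (z != 0)].
pose fiber (z : L) := #|[pred y : L | y ^+ q.+1 == z]|.
have card_Fq' : (#|Fq'| <= q.-1)%N.
  have := card_expr_fixed_le L q_gt1; rewrite (cardD1 0) !inE expr0n gtn_eqF //= eqxx.
  have -> : #|[predD1 [pred z : L | z ^+ q == z] & 0]| = #|Fq'|.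
    by apply: eq_card => y; rewrite !inE andbC.
  lia.
have sum_fiber : (\sum_(z in Fq') fiber z = (q ^ 2).-1)%N.
  rewrite -cardL -(cardC1 (0 : L)) -sum1_card.
  rewrite [RHS](partition_big (fun y => y ^+ q.+1) (mem Fq')) /= => [|y].
    apply: eq_bigr => w /andP [_ w_neq0]; rewrite /fiber -sum1_card.
    apply: eq_bigl => y; rewrite !inE; case: eqP => [yw|]; rewrite ?andbT ?andbF //.
    by apply/esym; apply: contraNneq w_neq0 => y0; rewrite -yw y0 expr0n.
  by rewrite !inE => y_neq0; rewrite fixed_q_norm eqxx expf_neq0.
have fiber_full : (\sum_(z in Fq') (q.+1 - fiber z) == 0)%N.
  rewrite sumnB => [|w _]; last exact: card_expr_eq_le.
  rewrite sum_fiber sum_nat_const subn_eq0.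
  apply: leq_trans (leq_mul card_Fq' (leqnn q.+1)) _; nia.
move=> zq z_neq0; apply/eqP; rewrite eqn_leq card_expr_eq_le //=.
move: fiber_full; rewrite sum_nat_eq0 => /forallP/(_ z)/implyP.
by rewrite inE zq eqxx z_neq0 subn_eq0; apply.
Qed.

Lemma sum_addChar_mul (a : L) : a != 0 -> \sum_(x : L) ch (a * x) = 0.
Proof.
move=> a_neq0; have [x ch_x] := exists_addChar_neq1 p_prime n_gt0 cardL_p zeta_prim.
apply: (sum_additive_char_eq0 (d := x / a)) => //; first by move=> y z; rewrite mulrDr chD.
by rewrite mulrC mulfVK.
Qed.

Lemma sum_fixed_q_addChar (c : L) :
  c ^+ q = c -> c != 0 -> \sum_(z | z ^+ q == z) ch (c * z) = 0.
Proof.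
move=> cq c_neq0; have [y yq ch_y] := exists_fixed_q_addChar_neq1.
apply: (sum_additive_char_eq0 (d := y / c)).
- by move=> x z; rewrite mulrDr chD.
- by move=> z; rewrite exprDn_pchar // exprMn exprVn yq cq (inj_eq (addIr _)).
- by rewrite mulrC mulfVK.
Qed.

Lemma sum_addChar_norm (c : L) :
  c ^+ q = c -> c != 0 -> \sum_(y : L) ch (c * y ^+ q.+1) = - q%:R.
Proof.
move=> cq c_neq0; have fixed0 : (0 : L) ^+ q == 0 by rewrite expr0n gtn_eqF.
have sum_units : \sum_(z | (z ^+ q == z) && (z != 0)) ch (c * z) = -1.
  have := sum_fixed_q_addChar cq c_neq0; rewrite (bigD1 0) //= mulr0 ch0.
  by move/eqP; rewrite addrC addr_eq0 => /eqP.
rewrite (partition_big (fun y => y ^+ q.+1) (fun z => z ^+ q == z)) => [|y _]; last first.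
  by rewrite fixed_q_norm.
have fiber_sum (z : L) : \sum_(y | true && (y ^+ q.+1 == z)) ch (c * y ^+ q.+1)
    = ch (c * z) *+ #|[pred y : L | y ^+ q.+1 == z]|.
  by rewrite -sumr_const; apply: eq_big => y; rewrite ?inE // => /eqP ->.
under eq_bigr do rewrite fiber_sum.
rewrite (bigD1 0) //= mulr0 ch0.
have -> : #|[pred y : L | y ^+ q.+1 == 0]| = 1%N.
  by rewrite -(card1 (0 : L)); apply: eq_card => y; rewrite !inE expf_eq0.
rewrite (eq_bigr (fun z => ch (c * z) *+ q.+1)) => [|z /andP [/eqP zq z_neq0]].
  by rewrite sumrMnl sum_units mulNrn mulrS; ring.
by rewrite card_norm_fiber.
Qed.

Lemma addChar_sub_frob (z : L) : ch (z - z ^+ q) = 1.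
Proof. by rewrite chD chN ch_frob // mulfV. Qed.

(* Completing the norm: x = y - (a / (2 c)) ^+ q turns a x + c x^(q+1) into
   c y^(q+1) - a^(q+1) / (4 c), up to a term z - z ^+ q. *)
Lemma sum_addChar_mul_norm (a c : L) :
  c ^+ q = c -> c != 0 ->
  \sum_(x : L) ch (a * x) * ch (c * x ^+ q.+1)
    = - q%:R * ch (- (4%:R * c)^-1 * a ^+ q.+1).
Proof.
move=> cq c_neq0; pose w := a / (2%:R * c).
have two_q : (2%:R : L) ^+ q = 2%:R by rewrite natr_expr_pchar.
have wq : w ^+ q = a ^+ q / (2%:R * c) by rewrite exprMn exprVn exprMn two_q cq.
rewrite (reindex_inj (addIr (- w ^+ q))) /=.
have complete (y : L) : a * (y - w ^+ q) + c * (y - w ^+ q) ^+ q.+1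
    = c * y ^+ q.+1 + ((2%:R^-1 * (a * y)) - (2%:R^-1 * (a * y)) ^+ q)
      + - (4%:R * c)^-1 * a ^+ q.+1.
  have normE : (y - w ^+ q) ^+ q.+1 = (y - w ^+ q) * (y ^+ q - w).
    by rewrite exprS exprBn_pchar // expr_qq.
  have halfE : (2%:R^-1 * (a * y)) ^+ q = 2%:R^-1 * (a ^+ q * y ^+ q).
    by rewrite !exprMn exprVn two_q.
  rewrite normE halfE wq !exprS /w; field.
  by rewrite c_neq0 four_neq0 two_neq0.
under eq_bigr do rewrite -chD complete chD chD addChar_sub_frob mulr1.
by rewrite -mulr_suml sum_addChar_norm // mulrC.
Qed.

Lemma sum_fixed_r_inv4 (F : L -> algC) :
  \sum_(c | (c ^+ r == c) && (c != 0)) F (4%:R * c)^-1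
    = \sum_(c | (c ^+ r == c) && (c != 0)) F c.
Proof.
have inv4K : involutive (fun c : L => (4%:R * c)^-1).
  by move=> c /=; rewrite invfM invrK mulKf ?four_neq0.
rewrite [RHS](reindex_inj (inv_inj inv4K)) /=; apply: eq_bigl => c.
rewrite invr_eq0 mulf_eq0 negb_or four_neq0 /=.
have four_r : (4%:R : L) ^+ r = 4%:R by rewrite natr_expr_pchar.
by rewrite exprVn exprMn four_r (inj_eq (inv_inj invrK)) (inj_eq (mulfI four_neq0)).
Qed.

Section Theta.
Variable theta : L.
Hypotheses (theta_q : theta ^+ q = theta) (relTr_theta : Tr theta = 1).

Local Notation psi y := (ch (theta * y)).
Local Notation card_Fr := (#|[pred c : L | c ^+ r == c]|%:R : algC).

(* Frobenius invariance of ch moves each conjugate of y onto theta. *)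
Lemma addChar_theta_relTr (y : L) : y ^+ q = y -> psi (Tr y) = ch y.
Proof.
move=> yq; rewrite /relTr mulr_sumr ch_sum (reindex_inj rev_ord_inj) /=.
have conj_theta (i : 'I_s) :
    ch (theta * y ^+ (r ^ rev_ord i)) = ch (theta ^+ (r ^ i.+1) * y).
  rewrite -(ch_frob _ (pchar_nat_expr_r i.+1)) exprMn -exprM -expnD /=.
  by rewrite subnK ?ltn_ord // yq.
have sum_conj : \sum_(i < s) theta ^+ (r ^ i.+1) = 1.
  rewrite -relTr_theta -(relTr_fixed_r theta_q) /relTr expr_sum_pchar //.
  by apply: eq_bigr => i _; rewrite -exprM expnSr.
by under eq_bigr do rewrite conj_theta; rewrite -ch_sum -mulr_suml sum_conj mul1r.
Qed.

Lemma addChar_theta_relTrZ (c y : L) :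
  c ^+ r = c -> y ^+ q = y -> psi (c * Tr y) = ch (c * y).
Proof.
move=> cr yq; rewrite -relTrZ // addChar_theta_relTr //.
by rewrite exprMn yq fixed_r_expn.
Qed.

Lemma sum_psi_fixed_r (m : L) : m ^+ r = m ->
  \sum_(c | c ^+ r == c) psi (c * m) = card_Fr * (m == 0)%:R.
Proof.
move=> mr; have [->|m_neq0] := eqVneq m 0.
  rewrite mulr1 -sumr_const; apply: eq_big => c; rewrite ?inE // => _.
  by rewrite !mulr0 ch0.
have [y yq ch_y] := exists_fixed_q_addChar_neq1.
rewrite mulr0; apply: (sum_additive_char_eq0 (d := Tr y / m)).
- by move=> c c'; rewrite mulrDl mulrDr chD.
- by move=> c; rewrite exprDn_pchar // exprMn exprVn mr relTr_fixed_r // (inj_eq (addIr _)).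
- by rewrite mulfVK // addChar_theta_relTr.
Qed.

Lemma qchar_fourier (v : L) : v ^+ r = v ->
  card_Fr * (qchar r v + 1)
    = \sum_(u | u ^+ r == u) \sum_(c | c ^+ r == c) psi (c * (u ^+ 2 - v)).
Proof.
move=> vr; have r_odd : odd r by rewrite oddX p_odd orbT.
rewrite (qchar_sum_sqrt r_odd two_neq0 vr) subrK mulr_sumr.
apply: eq_bigr => u /eqP ur; rewrite sum_psi_fixed_r ?subr_eq0 //.
by rewrite exprBn_pchar // vr -exprM mulnC exprM ur.
Qed.

Lemma psi_sqr_sub_relTr_norm (c u x : L) : c ^+ r = c ->
  psi (c * (u ^+ 2 - Tr (x ^+ q.+1))) = psi (c * u ^+ 2) * ch (- c * x ^+ q.+1).
Proof.
move=> cr; rewrite mulrBr mulrBr chD chN addChar_theta_relTrZ ?fixed_q_norm //.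
by rewrite mulNr chN.
Qed.

Lemma sum_addChar_mul_qchar_expand (a : L) : a != 0 ->
  card_Fr * \sum_(x : L) ch (a * x) * qchar r (Tr (x ^+ q.+1))
    = \sum_(u | u ^+ r == u) \sum_(c | c ^+ r == c)
        psi (c * u ^+ 2) * \sum_(x : L) ch (a * x) * ch (- c * x ^+ q.+1).
Proof.
move=> a_neq0.
transitivity (\sum_(x : L) ch (a * x) * (card_Fr * (qchar r (Tr (x ^+ q.+1)) + 1))).
  under [RHS]eq_bigr do rewrite mulrDr mulr1 mulrDr.
  rewrite big_split /= -mulr_suml sum_addChar_mul // mul0r addr0 mulr_sumr.
  by apply: eq_bigr => x _; rewrite mulrCA.
under eq_bigr => x _.
  rewrite qchar_fourier ?relTr_fixed_r ?fixed_q_norm // mulr_sumr.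
  under eq_bigr do rewrite mulr_sumr.
  over.
rewrite exchange_big /=; apply: eq_bigr => u _.
rewrite exchange_big /=; apply: eq_bigr => c /eqP cr.
rewrite mulr_sumr; apply: eq_bigr => x _.
by rewrite psi_sqr_sub_relTr_norm // mulrCA.
Qed.

Lemma sum_addChar_mul_neg_norm (a c : L) : c ^+ r = c -> c != 0 ->
  \sum_(x : L) ch (a * x) * ch (- c * x ^+ q.+1)
    = - q%:R * psi ((4%:R * c)^-1 * Tr (a ^+ q.+1)).
Proof.
move=> cr c_neq0; have cq : c ^+ q = c := fixed_r_expn s cr.
rewrite sum_addChar_mul_norm ?oppr_eq0 ?exprNn_pchar ?cq // mulrN invrN opprK.
by rewrite addChar_theta_relTrZ ?fixed_q_norm // exprVn exprMn natr_expr_pchar // cr.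
Qed.

Lemma sum_psi_sqr_shift (b c : L) : c ^+ r = c -> c != 0 ->
  \sum_(u | u ^+ r == u) psi (c * u ^+ 2) * psi ((4%:R * c)^-1 * b)
    = \sum_(u | u ^+ r == u) psi ((4%:R * c)^-1 * (u ^+ 2 + b)).
Proof.
move=> cr c_neq0; have h_neq0 : (2%:R * c)^-1 != 0 by rewrite invr_eq0 mulf_neq0 ?two_neq0.
have h_r : ((2%:R * c)^-1) ^+ r = (2%:R * c)^-1.
  by rewrite exprVn exprMn natr_expr_pchar // cr.
rewrite (reindex_inj (mulIf h_neq0)) /=; apply: eq_big => [u|u _].
  by rewrite exprMn h_r (inj_eq (mulIf h_neq0)).
rewrite -chD -mulrDr; congr (ch (theta * _)); field.
by rewrite c_neq0 two_neq0 four_neq0.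
Qed.

Lemma sum_psi_sqr_add (b : L) : b ^+ r = b ->
  \sum_(d | (d ^+ r == d) && (d != 0)) \sum_(u | u ^+ r == u) psi (d * (u ^+ 2 + b))
    = card_Fr * qchar r (- b).
Proof.
move=> br; have Nb_r : (- b) ^+ r = - b by rewrite exprNn_pchar // br.
apply: (addIr card_Fr); rewrite -[X in _ = _ + X]mulr1 -mulrDr qchar_fourier //.
rewrite [RHS]exchange_big /= [RHS](bigD1 0) /=; last by rewrite expr0n gtn_eqF.
rewrite addrC; congr (_ + _).
  by apply: eq_bigr => d _; apply: eq_bigr => u _; rewrite opprK.
by rewrite -sumr_const; apply: eq_big => u; rewrite ?inE // => _; rewrite !mul0r mulr0 ch0.
Qed.

Lemma sum_addChar_mul_qchar (a : L) : a != 0 ->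
  \sum_(x : L) ch (a * x) * qchar r (Tr (x ^+ q.+1))
    = - q%:R * qchar r (- Tr (a ^+ q.+1)).
Proof.
move=> a_neq0; set b := Tr (a ^+ q.+1).
have br : b ^+ r = b := relTr_fixed_r (fixed_q_norm a).
have card_neq0 : card_Fr != 0.
  by rewrite pnatr_eq0 -lt0n; apply/card_gt0P; exists 0; rewrite inE expr0n gtn_eqF.
apply: (mulfI card_neq0); rewrite sum_addChar_mul_qchar_expand //.
transitivity (- q%:R * \sum_(c | (c ^+ r == c) && (c != 0))
    \sum_(u | u ^+ r == u) psi ((4%:R * c)^-1 * (u ^+ 2 + b))).
  rewrite exchange_big /= (bigD1 0) /=; last by rewrite expr0n gtn_eqF.
  rewrite big1 ?add0r => [|u _]; last first.
    rewrite (eq_bigr (fun x => ch (a * x))) ?sum_addChar_mul ?mulr0 // => x _.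
    by rewrite oppr0 mul0r ch0 mulr1.
  rewrite mulr_sumr; apply: eq_bigr => c /andP [/eqP cr c_neq0].
  rewrite -sum_psi_sqr_shift // mulr_sumr; apply: eq_bigr => u _.
  by rewrite sum_addChar_mul_neg_norm // mulrCA.
have := sum_fixed_r_inv4 (fun d => \sum_(u | u ^+ r == u) psi (d * (u ^+ 2 + b))).
by rewrite /= => ->; rewrite sum_psi_sqr_add // mulrCA.
Qed.

End Theta.

End HermitianSums.

Theorem mainTheorem11 (p t s : nat) (L : finFieldType) (zeta : algC) (a : L) :
  prime p -> odd p -> (0 < t)%N -> (0 < s)%N ->
  #|L| = (((p ^ t) ^ s) ^ 2)%N ->
  p.-primitive_root zeta ->
  a != 0 ->
  let r := (p ^ t)%N in
  let q := (r ^ s)%N in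
  let T := q.+1 in
  let Q := \sum_(x : L) addChar p (2 * (t * s)) zeta (a * x)
                        * qchar r (relTr r s (x ^+ T)) in
  (relTr r s (a ^+ T) = 0 -> Q = 0) /\
  (relTr r s (a ^+ T) != 0 -> Q = - (q%:R) * qchar r (- relTr r s (a ^+ T))).
Proof.
move=> p_prime p_odd t_gt0 s_gt0 cardL zeta_prim a_neq0 r q T Q.
have [theta theta_q relTr_theta] := exists_relTr_eq1 p_prime t_gt0 s_gt0 cardL.
have -> : Q = - q%:R * qchar r (- relTr r s (a ^+ T)).
  exact: (sum_addChar_mul_qchar p_prime p_odd t_gt0 s_gt0 cardL zeta_prim
    theta_q relTr_theta a_neq0).
split=> // relTr_eq0.
by rewrite relTr_eq0 oppr0 /qchar eqxx mulr0.
Qed.
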